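(* Fix a context $x$, a finite response set $\mathcal Y(x)$, a distribution $\pi_{\mathrm{old}}(\cdot\mid x)$ on $\mathcal Y(x)$, a function $A(x,\cdot):\mathcal Y(x)\to\mathbb R$, and $\beta>0$. For $\tau>0$ define the Lambert mass function \[ M_A(\tau)=\mathbb E_{y\sim\pi_{\mathrm{old}}(\cdot\mid x)}\left[\frac{1}{\tau}W_0\!\left(\tau\exp\!\left(\frac{A(x,y)}{\beta}\right)\right)\right]. \] Suppose $\tau_s>0$ satisfies $M_A(\tau_s)=1$. If $\mathbb E_{y\sim\pi_{\mathrm{old}}(\cdot\mid x)}[A(x,y)]\ge\beta$, then $\tau_s\ge1$. Consequently: (i) for any rewards $r_1,\dots,r_G\in\mathbb R$ ($G\ge 1$) with $\bar r=\frac1G\sum_j r_j$, the advantages $\widehat A_i=r_i-\bar r+\beta$ satisfy $\frac1G\sum_{i=1}^G W_0(\exp(\widehat A_i/\beta))\ge1$, so that any $\widehat\tau>0$ with $\frac1G\sum_{i=1}^G\frac{1}{\widehat\tau}W_0(\widehat\tau\exp(\widehat A_i/\beta))=1$ satisfies $\widehat\tau\ge1$; and (ii) if $r:\mathcal Y(x)\to\mathbb R$ is a reward, $V_{\mathrm{old}}(x)=\mathbb E_{y\sim\pi_{\mathrm{old}}}[r(y)]$, and $A_G(x,y)=\frac{G-1}{G}(r(y)-V_{\mathrm{old}}(x))+\beta$ (which equals $\mathbb E[r_i-\bar r+\beta\mid y_i=y]$ when $y_1,\dots,y_G$ are i.i.d. from $\pi_{\mathrm{old}}(\cdot\mid x)$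 and $r_j=r(y_j)$), then any $\tau_s>0$ with $M_{A_G}(\tau_s)=1$ satisfies $\tau_s\ge1$.
   Context: $W_0$ denotes the principal branch of the Lambert $W$ function, i.e. the inverse of $w\mapsto we^w$ on $[-1,\infty)$, satisfying $W_0(z)e^{W_0(z)}=z$. $\tau_s$ is called the Lambert normalization multiplier; the Lambert target is $\pi^\star(y\mid x)=\frac{\pi_{\mathrm{old}}(y\mid x)}{\tau_s}W_0(\tau_s e^{A(x,y)/\beta})$. *)

From HB Require Import structures.
From mathcomp Require Import all_boot all_order all_algebra.
From mathcomp Require Import all_classical all_reals all_analysis.
Set Implicit Arguments. Unset Strict Implicit. Unset Printing Implicit Defensive.
Import Order.TTheory GRing.Theory Num.Theory.
Local Open Scope classical_set_scope.
Local Open Scope ring_scope.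

(* Since w |-> w e^w is injective on [-1, oo), this is well defined for
   z >= -1/e (the only arguments used here are positive). *)
Definition W0 {R : realType} (z : R) : R :=
  xget 0 [set w : R | -1 <= w /\ w * expR w = z].

Definition lambert_mass {R : realType} {Y : finType} (pi : Y -> R) (A : Y -> R)
  (beta tau : R) : R :=
  \sum_(y : Y) pi y * (tau^-1 * W0 (tau * expR (A y / beta))).

(** W0 (e^a) lies above the tangent-like line (1 + a)/2, because
    e^(w-1) >= w gives e^(2w-1) >= w e^w = e^a.  Hence a mean advantage of
    at least beta forces the Lambert mass at tau = 1 to be at least 1.  On the
    other hand tau |-> W0(tau c)/tau is strictly decreasing, so a normaliser
    tau_s < 1 would make the mass at tau_s strictly larger than at 1, i.e. > 1. *)
From HB Require Import structures.
From mathcomp Require Import all_boot all_order all_algebra.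
From mathcomp Require Import all_classical all_reals all_analysis.
From mathcomp Require Import ring lra.
Import Order.TTheory GRing.Theory Num.Theory.
Import numFieldNormedType.Exports.
Local Open Scope ring_scope.

Section LambertW.
Variable R : realType.
Implicit Types a c t z : R.

Lemma lambert_root_exists {z} : 0 < z -> exists w : R, 0 <= w /\ w * expR w = z.
Proof.
move=> z_gt0.
have wexpR_cont : continuous (fun w : R => w * expR w).
  by move=> y; exact: (continuousM (@cvg_id _ _) (@continuous_expR R y)).
have z_le_zexpR : z <= z * expR z.
  by rewrite -{1}(mulr1 z) ler_pM2l // -expR0 ler_expR ltW.
have z_between :
    Num.min (0 * expR 0) (z * expR z) <= z <= Num.max (0 * expR 0) (z * expR z).
  by rewrite mul0r ge_min le_max (ltW z_gt0) z_le_zexpR orbT.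
have [w /itvP w_in wE] :=
  IVT (ltW z_gt0) (continuous_subspaceT wexpR_cont) z_between.
by exists w; rewrite w_in.
Qed.

Lemma W0_spec {z} : 0 < z -> 0 < W0 z /\ W0 z * expR (W0 z) = z.
Proof.
move=> z_gt0; have [w [w_ge0 wE]] := lambert_root_exists z_gt0.
have root_ge : exists w : R, -1 <= w /\ w * expR w = z.
  by exists w; split=> //; lra.
have [_ W0E] := xgetPex 0 root_ge; rewrite -/(W0 z) in W0E.
split=> //; rewrite ltNge; apply/negP => W0_le0.
have := mulr_le0_ge0 W0_le0 (expR_ge0 (W0 z)).
by rewrite W0E leNgt z_gt0.
Qed.

Lemma W0_expR_ge a : (1 + a) / 2 <= W0 (expR a).
Proof.
have [w_gt0 wE] := W0_spec (expR_gt0 a); set w := W0 (expR a) in w_gt0 wE *.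
rewrite leNgt; apply/negP => w_small.
have : expR (2 * w - 1) < expR a by rewrite ltr_expR; lra.
have -> : 2 * w - 1 = (w - 1) + w by ring.
rewrite expRD -wE ltr_pM2r ?expR_gt0 // ltNge.
by rewrite -{1}(addrNK 1 w) addrC expR_ge1Dx.
Qed.

Lemma W0_lt_scaled_W0 t c : 0 < t -> t < 1 -> 0 < c ->
  W0 c < t^-1 * W0 (t * c).
Proof.
move=> t_gt0 t_lt1 c_gt0.
have [u_gt0 uE] := W0_spec (mulr_gt0 t_gt0 c_gt0).
have [v_gt0 vE] := W0_spec c_gt0.
set u := W0 (t * c) in u_gt0 uE *; set v := W0 c in v_gt0 vE *.
have u_lt_v : u < v.
  rewrite ltNge; apply/negP => v_le_u.
  have : expR v <= expR u by rewrite ler_expR.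
  have := expR_gt0 v; nra.
have s_expR_u : t^-1 * u * expR u = c by rewrite -mulrA uE mulKf ?gt_eqF.
have s_gt0 : 0 < t^-1 * u by rewrite mulr_gt0 ?invr_gt0.
have expR_u_lt : expR u < expR v by rewrite ltr_expR.
set s := t^-1 * u in s_expR_u s_gt0 *.
(* s e^u = c = v e^v with e^u < e^v forces s > v. *)
rewrite ltNge; apply/negP => s_le_v.
have := expR_gt0 u; nra.
Qed.

End LambertW.

Lemma ltr_weighted_sum (R : realDomainType) (I : finType) (p f g : I -> R) :
  (forall i, 0 <= p i) -> \sum_i p i != 0 -> (forall i, f i < g i) ->
  \sum_i p i * f i < \sum_i p i * g i.
Proof.
move=> p_ge0 p_neq0 f_lt_g.
have [i0 p_i0] : exists i, 0 < p i.
  apply: contraNP p_neq0 => no_pos; apply/eqP; apply: big1 => i _.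
  by apply/eqP; rewrite eq_le p_ge0 andbT leNgt; apply/negP => ?; apply: no_pos; exists i.
rewrite -subr_gt0 -sumrB (bigD1 i0) //= -mulrBr.
apply: ltr_wpDr; last by rewrite mulr_gt0 // subr_gt0.
by apply: sumr_ge0 => i _; rewrite -mulrBr mulr_ge0 // subr_ge0 ltW.
Qed.

Section LambertMass.
Variables (R : realType) (Y : finType) (pi : Y -> R) (beta : R).
Hypotheses (pi_ge0 : forall y, 0 <= pi y) (pi_sum1 : \sum_y pi y = 1)
  (beta_gt0 : 0 < beta).

Lemma lambert_mass1 (A : Y -> R) :
  lambert_mass pi A beta 1 = \sum_y pi y * W0 (expR (A y / beta)).
Proof. by apply: eq_bigr => y _; rewrite invr1 !mul1r. Qed.

Lemma lambert_mass1_ge1 (A : Y -> R) :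
  beta <= \sum_y pi y * A y -> 1 <= \sum_y pi y * W0 (expR (A y / beta)).
Proof.
move=> mean_ge.
have mean_ratio : 1 <= \sum_y pi y * (A y / beta).
  rewrite -(divff (lt0r_neq0 beta_gt0)).
  under eq_bigr do rewrite mulrA.
  by rewrite -mulr_suml ler_pM2r ?invr_gt0.
have tangent_sum : \sum_y pi y * ((1 + A y / beta) / 2) <=
    \sum_y pi y * W0 (expR (A y / beta)).
  by apply: ler_sum => y _; rewrite ler_wpM2l // W0_expR_ge.
apply: le_trans tangent_sum.
rewrite (eq_bigr (fun y => 2^-1 * pi y + 2^-1 * (pi y * (A y / beta))));
  last by move=> y _; ring.
by rewrite big_split /= -!mulr_sumr pi_sum1; lra.
Qed.

Lemma lambert_mass_gt1 (A : Y -> R) {t : R} : 0 < t -> t < 1 ->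
  lambert_mass pi A beta 1 < lambert_mass pi A beta t.
Proof.
move=> t_gt0 t_lt1; rewrite lambert_mass1.
apply: ltr_weighted_sum => [//||y]; first by rewrite pi_sum1 oner_neq0.
by apply: W0_lt_scaled_W0 => //; exact: expR_gt0.
Qed.

Lemma lambert_normaliser_ge1 (A : Y -> R) taus : 0 < taus ->
  lambert_mass pi A beta taus = 1 -> beta <= \sum_y pi y * A y -> 1 <= taus.
Proof.
move=> taus_gt0 massE mean_ge; rewrite leNgt; apply/negP => taus_lt1.
have := lambert_mass_gt1 A taus_gt0 taus_lt1.
by rewrite massE lambert_mass1 ltNge lambert_mass1_ge1.
Qed.

Lemma mean_centered_shift (r : Y -> R) k :
  \sum_y pi y * (k * (r y - \sum_z pi z * r z) + beta) = beta.
Proof.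
rewrite (eq_bigr (fun y => k * (pi y * r y) - k * (\sum_z pi z * r z) * pi y
  + beta * pi y)); last by move=> y _; ring.
by rewrite big_split sumrB /= -!mulr_sumr pi_sum1; ring.
Qed.

End LambertMass.

Theorem proposition2 (R : realType) :
  (* main claim *)
  (forall (Y : finType) (pi A : Y -> R) (beta taus : R),
     (forall y, 0 <= pi y) -> \sum_(y : Y) pi y = 1 ->
     0 < beta -> 0 < taus -> lambert_mass pi A beta taus = 1 ->
     beta <= \sum_(y : Y) pi y * A y -> 1 <= taus)
  /\
  (* consequence (i): empirical group advantages *)
  (forall (G : nat) (r : 'I_G -> R) (beta : R),
     (0 < G)%N -> 0 < beta ->
     let rbar := G%:R^-1 * \sum_(j < G) r j in
     let Ahat := fun i : 'I_G => r i - rbar + beta in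
     1 <= G%:R^-1 * \sum_(i < G) W0 (expR (Ahat i / beta)) /\
     (forall tauh : R, 0 < tauh ->
        G%:R^-1 * \sum_(i < G) (tauh^-1 * W0 (tauh * expR (Ahat i / beta))) = 1 ->
        1 <= tauh))
  /\
  (* consequence (ii): population advantage A_G *)
  (forall (Y : finType) (pi r : Y -> R) (beta : R) (G : nat) (taus : R),
     (forall y, 0 <= pi y) -> \sum_(y : Y) pi y = 1 ->
     0 < beta -> (0 < G)%N ->
     let Vold := \sum_(y : Y) pi y * r y in
     let AG := fun y : Y => (G%:R - 1) / G%:R * (r y - Vold) + beta in
     0 < taus -> lambert_mass pi AG beta taus = 1 -> 1 <= taus).
Proof.
split.
  move=> Y pi A beta taus pi_ge0 pi_sum1 beta_gt0 taus_gt0 massE.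
  exact: lambert_normaliser_ge1 massE.
split; last first.
  move=> Y pi r beta G taus pi_ge0 pi_sum1 beta_gt0 _ Vold AG taus_gt0 massE.
  apply: lambert_normaliser_ge1 taus_gt0 massE _ => //.
  by rewrite mean_centered_shift.
move=> G r beta G_gt0 beta_gt0 rbar Ahat.
pose unif := fun _ : 'I_G => (G%:R : R)^-1.
have unif_ge0 i : 0 <= unif i by rewrite invr_ge0 ler0n.
have unif_sum1 : \sum_i unif i = 1.
  by rewrite sumr_const card_ord -[_ *+ G]mulr_natr mulVf // pnatr_eq0 -lt0n.
have mean_Ahat : beta <= \sum_i unif i * Ahat i.
  have rbarE : rbar = \sum_j unif j * r j by rewrite /rbar mulr_sumr.
  rewrite (eq_bigr (fun i => unif i * (1 * (r i - \sum_j unif j * r j) + beta))).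
    by rewrite mean_centered_shift.
  by move=> i _; rewrite mul1r /Ahat rbarE.
split; first by rewrite mulr_sumr; exact: lambert_mass1_ge1 mean_Ahat.
move=> tauh tauh_gt0 massE.
apply: lambert_normaliser_ge1 tauh_gt0 _ mean_Ahat => //.
by rewrite /lambert_mass -massE mulr_sumr.
Qed.
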